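(* Let $C$ be the split octonion algebra over $k$, $G_C=\mathrm{Aut}(C)$, $V_C=1_C^\perp$, and let $G_C\times GL_1$ act on $V_C$ by $(\phi,a)\cdot v=a\,\phi(v)$. Let $V_C^{ss}(k)=\{v\in V_C(k):N_C(v)\neq0\}$. Then $v\mapsto N_C(v)k^{\times2}$ induces a bijection $V_C^{ss}(k)/(G_C\times GL_1)(k)\to k^\times/k^{\times2}$; hence these orbits are in bijection with the isomorphism classes of $2$-dimensional composition algebras over $k$.
   Context: $k$ is a field with $\mathrm{char}(k)\neq2$. An octonion algebra is an 8-dimensional unital $k$-algebra with non-degenerate multiplicative quadratic norm $N_C$; it is split if $N_C$ is isotropic (unique up to isomorphism). $1_C^\perp$ is the orthogonal complement of the identity with respect to the bilinear form of $N_C$. *)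

From HB Require Import structures.
From mathcomp Require Import all_boot all_order all_algebra.
Set Implicit Arguments. Unset Strict Implicit. Unset Printing Implicit Defensive.
Import Order.TTheory GRing.Theory Num.Theory.
Local Open Scope ring_scope.

(* An n-dimensional k-algebra is modelled on the coordinate space 'rV[k]_n
   with a multiplication [mul], a unit [one] and a quadratic norm [N]. *)

Section CompositionAlgebras.
Variable k : fieldType.
Variable n : nat.
Implicit Types (mul : 'rV[k]_n -> 'rV[k]_n -> 'rV[k]_n) (one : 'rV[k]_n)
  (N : 'rV[k]_n -> k).

Definition polar N (x y : 'rV[k]_n) : k := N (x + y) - N x - N y.

Definition is_bilinear_mul mul : Prop :=
  (forall (a : k) x y z, mul (a *: x + y) z = a *: mul x z + mul y z) /\
  (forall (a : k) x y z, mul z (a *: x + y) = a *: mul z x + mul z y).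

Definition is_unit_of mul one : Prop :=
  forall x, mul one x = x /\ mul x one = x.

Definition is_quadratic_form N : Prop :=
  (forall (a : k) x, N (a *: x) = a ^+ 2 * N x) /\
  (forall (a : k) x y z, polar N (a *: x + y) z = a * polar N x z + polar N y z).

Definition nondegenerate N : Prop :=
  forall x, (forall y, polar N x y = 0) -> x = 0.

Definition multiplicative mul N : Prop :=
  forall x y, N (mul x y) = N x * N y.

Definition is_composition_algebra mul one N : Prop :=
  [/\ is_bilinear_mul mul, is_unit_of mul one, is_quadratic_form N,
      nondegenerate N & multiplicative mul N].

Definition isotropic N : Prop := exists x, x != 0 /\ N x = 0.

Definition is_alg_aut mul one (phi : 'rV[k]_n -> 'rV[k]_n) : Prop :=
  [/\ linear phi, bijective phi, phi one = one &
      forall x y, phi (mul x y) = mul (phi x) (phi y)].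

End CompositionAlgebras.

Definition is_octonion_algebra (k : fieldType) mul one (N : 'rV[k]_8 -> k) :=
  is_composition_algebra mul one N.

Definition is_split_octonion_algebra (k : fieldType) mul one (N : 'rV[k]_8 -> k) :=
  is_octonion_algebra mul one N /\ isotropic N.

Definition in_VC (k : fieldType) (one : 'rV[k]_8) (N : 'rV[k]_8 -> k) v :=
  polar N one v = 0.

Definition in_VCss (k : fieldType) (one : 'rV[k]_8) (N : 'rV[k]_8 -> k) v :=
  in_VC one N v /\ N v != 0.

Definition same_orbit (k : fieldType) mul (one : 'rV[k]_8) (v w : 'rV[k]_8) :=
  exists (phi : 'rV[k]_8 -> 'rV[k]_8) (a : k),
    [/\ is_alg_aut mul one phi, a != 0 & w = a *: phi v].

Definition same_sq_class (k : fieldType) (c d : k) :=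
  exists t : k, t != 0 /\ c = t ^+ 2 * d.

Record alg2 (k : fieldType) := Alg2 {
  a2_mul : 'rV[k]_2 -> 'rV[k]_2 -> 'rV[k]_2;
  a2_one : 'rV[k]_2;
  a2_N : 'rV[k]_2 -> k }.

Definition is_comp_alg2 (k : fieldType) (A : alg2 k) :=
  is_composition_algebra (a2_mul A) (a2_one A) (a2_N A).

Definition alg2_iso (k : fieldType) (A B : alg2 k) :=
  exists f : 'rV[k]_2 -> 'rV[k]_2,
    [/\ linear f, bijective f, f (a2_one A) = a2_one B &
        forall x y, f (a2_mul A x y) = a2_mul B (f x) (f y)].

From HB Require Import structures.
From mathcomp Require Import all_boot all_order all_algebra.
From mathcomp Require Import ring.
From Stdlib Require Import Classical.
Import Order.TTheory GRing.Theory Num.Theory.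
Set Implicit Arguments. Unset Strict Implicit. Unset Printing Implicit Defensive.
Local Open Scope ring_scope.

(* For [v] orthogonal to [1] with [N v != 0], choosing [a] orthogonal to [<1, v>] and [b]
   orthogonal to [<1, v, a, v a>], all anisotropic, presents the algebra as the threefold
   Cayley-Dickson double of [k] with parameters [N v], [N a], [N b]. When [N] is isotropic
   these choices can be made with [N a = N b = -1]: an isotropic vector, written [x + y b]
   with [x], [y] quaternions, either yields a quaternion of norm [-1 / N b] or makes the
   quaternion norm universal. Hence the presentation depends on [N v] only, and vectors of
   [1^perp] whose norms agree up to squares are conjugate under automorphisms. Conversely
   automorphisms preserve [N], since [x^2 - tr(x) x + N(x) = 0]. Every class of [k^x / k^x2]
   is a norm from [1^perp], because [b] and [a b] span a hyperbolic plane there. Finally the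
   class of [c] corresponds to the quadratic algebra [k[u]/(u^2 + c)], and every
   2-dimensional composition algebra is of this form. *)

Section LinearFunctions.
Variables (k : fieldType) (U W : lmodType k) (f : U -> W).
Hypothesis f_lin : linear f.

Lemma lin_fun0 : f 0 = 0.
Proof.
have := f_lin 1 0 0; rewrite !scale1r addr0 => h.
by apply: (addrI (f 0)); rewrite addr0 -h.
Qed.

Lemma lin_funD x y : f (x + y) = f x + f y.
Proof. by have := f_lin 1 x y; rewrite !scale1r. Qed.

Lemma lin_funZ r x : f (r *: x) = r *: f x.
Proof. by rewrite -(addr0 (r *: x)) f_lin lin_fun0 addr0. Qed.

Lemma lin_funN x : f (- x) = - f x.
Proof. by rewrite -scaleN1r lin_funZ scaleN1r. Qed.

Lemma lin_funB x y : f (x - y) = f x - f y.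
Proof. by rewrite lin_funD lin_funN. Qed.

Lemma lin_fun_sum m (g : 'I_m -> U) : f (\sum_i g i) = \sum_i f (g i).
Proof. by elim/big_rec2: _ => [|i y1 y2 _ <-]; [exact: lin_fun0 | exact: lin_funD]. Qed.

End LinearFunctions.

Lemma inj_surj_bij (A : choiceType) (B : eqType) (e : A -> B) :
  injective e -> (forall z, exists p, z = e p) -> bijective e.
Proof.
move=> e_inj e_surj.
have ex z : exists p, z == e p by have [p ->] := e_surj z; exists p.
exists (fun z => xchoose (ex z)) => [p|z]; last exact/esym/eqP/(xchooseP (ex z)).
by apply: e_inj; rewrite -(eqP (xchooseP (ex (e p)))).
Qed.

Section Spans.
Variables (k : fieldType) (m n : nat) (F : 'I_m -> 'rV[k]_n).

Let M := \matrix_i F i.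

Lemma sum_scale_mulmx (c : 'I_m -> k) : \sum_i c i *: F i = (\row_i c i) *m M.
Proof. by rewrite mulmx_sum_row; apply: eq_bigr => i _; rewrite rowK mxE. Qed.

Lemma exists_notin_span : (m < n)%N ->
  exists z, forall c : 'I_m -> k, z != \sum_i c i *: F i.
Proof.
move=> lt_mn; have /row_subPn [j notin] : ~~ (1%:M <= M)%MS.
  apply: contraTN lt_mn => /mxrankS; rewrite mxrank1 -leqNgt => le_nr.
  exact: leq_trans le_nr (rank_leq_row M).
exists (row j 1%:M) => c; apply: contraNneq notin => ->.
by rewrite sum_scale_mulmx submxMl.
Qed.

Lemma free_family_spans : (n <= m)%N ->
  (forall c : 'I_m -> k, \sum_i c i *: F i = 0 -> forall i, c i = 0) ->
  forall z, exists c : 'I_m -> k, z = \sum_i c i *: F i.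
Proof.
move=> le_nm free z.
have freeM : row_free M.
  apply: inj_row_free => u uM0; apply/rowP => i; rewrite mxE.
  apply: (free (fun j => u 0 j)); rewrite sum_scale_mulmx -uM0.
  by congr (_ *m _); apply/rowP => j; rewrite mxE.
have fullM : row_full M.
  by rewrite -col_leq_rank (eqnP freeM).
have /submxP [D ->] := submx_full z fullM.
exists (fun i => D 0 i); rewrite sum_scale_mulmx; congr (_ *m _); by apply/rowP => i; rewrite mxE.
Qed.

End Spans.

Section CayleyDickson.
Variable k : fieldType.

Record cd_algebra := CDAlgebra {
  cd_carrier :> lmodType k;
  cd_mul : cd_carrier -> cd_carrier -> cd_carrier;
  cd_conj : cd_carrier -> cd_carrier;
  cd_polar : cd_carrier -> cd_carrier -> k;
  cd_one : cd_carrier }.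

Definition cd_scalars : cd_algebra :=
  @CDAlgebra k^o *%R id (fun x y => 2 * (x * y)) 1.

(* The doubling of [D] with parameter [g]: [(x, y)] stands for [x + y a] with [N a = g]. *)
Definition cd_double (D : cd_algebra) (g : k) : cd_algebra :=
  @CDAlgebra (D * D)%type
    (fun P Q => (cd_mul P.1 Q.1 - g *: cd_mul (cd_conj Q.2) P.2,
                 cd_mul Q.2 P.1 + cd_mul P.2 (cd_conj Q.1)))
    (fun P => (cd_conj P.1, - P.2))
    (fun P Q => cd_polar P.1 Q.1 + g * cd_polar P.2 Q.2)
    (cd_one D, 0).

Definition cd_nondeg (D : cd_algebra) :=
  forall P : D, (forall Q, cd_polar P Q = 0) -> P = 0.

Lemma cd_scalars_nondeg : (2 : k) != 0 -> cd_nondeg cd_scalars.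
Proof.
by move=> two_neq0 x /(_ 1) /= /eqP; rewrite mulr1 mulf_eq0 (negbTE two_neq0) => /eqP.
Qed.

End CayleyDickson.

Section CompositionAlgebra.
Variables (k : fieldType) (n : nat).
Local Notation V := 'rV[k]_n.
Variables (mul : V -> V -> V) (one : V) (N : V -> k).
Hypothesis two_neq0 : (2 : k) != 0.
Hypothesis n_gt0 : (0 < n)%N.
Hypothesis hC : is_composition_algebra mul one N.

Local Notation "x ** y" := (mul x y) (at level 40, left associativity).
Local Notation B := (polar N).

Lemma mul_linear_l z : linear (mul^~ z).
Proof. by case: hC => [[hl _]] _ _ _ _ a u v; exact: hl. Qed.
Lemma mul_linear_r z : linear (mul z).
Proof. by case: hC => [[_ hr]] _ _ _ _ a u v; exact: hr. Qed.
Lemma cmul1l x : one ** x = x. Proof. by case: hC => _ /(_ x) []. Qed.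
Lemma cmul1r x : x ** one = x. Proof. by case: hC => _ /(_ x) []. Qed.
Lemma normZ a x : N (a *: x) = a ^+ 2 * N x. Proof. by case: hC => _ _ []. Qed.
Lemma polar_linear_l z : linear (fun x => B x z : k^o).
Proof. by case: hC => _ _ [_ h] _ _ a x y; exact: h. Qed.
Lemma polar_nondeg x : (forall y, B x y = 0) -> x = 0. Proof. by case: hC => _ _ _ /(_ x). Qed.
Lemma norm_mul x y : N (x ** y) = N x * N y. Proof. by case: hC. Qed.

Lemma cmul0l x : 0 ** x = 0. Proof. exact: lin_fun0 (mul_linear_l x). Qed.
Lemma cmulDl x y z : (x + y) ** z = x ** z + y ** z. Proof. exact: lin_funD (mul_linear_l z) x y. Qed.
Lemma cmulDr x y z : z ** (x + y) = z ** x + z ** y. Proof. exact: lin_funD (mul_linear_r z) x y. Qed.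
Lemma cmulZl a x z : (a *: x) ** z = a *: (x ** z). Proof. exact: lin_funZ (mul_linear_l z) a x. Qed.
Lemma cmulZr a x z : z ** (a *: x) = a *: (z ** x). Proof. exact: lin_funZ (mul_linear_r z) a x. Qed.
Lemma cmulNl x z : (- x) ** z = - (x ** z). Proof. exact: lin_funN (mul_linear_l z) x. Qed.
Lemma cmulNr x z : z ** (- x) = - (z ** x). Proof. exact: lin_funN (mul_linear_r z) x. Qed.
Lemma cmulBl x y z : (x - y) ** z = x ** z - y ** z. Proof. exact: lin_funB (mul_linear_l z) x y. Qed.
Lemma cmulBr x y z : z ** (x - y) = z ** x - z ** y. Proof. exact: lin_funB (mul_linear_r z) x y. Qed.

Lemma norm0 : N 0 = 0. Proof. by rewrite -(scale0r 0) normZ expr0n mul0r. Qed.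
Lemma normD x y : N (x + y) = N x + N y + B x y. Proof. by rewrite /polar; ring. Qed.

Lemma polarC x y : B x y = B y x. Proof. by rewrite /polar (addrC x y); ring. Qed.
Lemma polarDl x y z : B (x + y) z = B x z + B y z. Proof. exact: lin_funD (polar_linear_l z) x y. Qed.
Lemma polarZl a x z : B (a *: x) z = a * B x z. Proof. exact: lin_funZ (polar_linear_l z) a x. Qed.
Lemma polar0l z : B 0 z = 0. Proof. exact: lin_fun0 (polar_linear_l z). Qed.
Lemma polarNl x z : B (- x) z = - B x z. Proof. exact: lin_funN (polar_linear_l z) x. Qed.
Lemma polarBl x y z : B (x - y) z = B x z - B y z. Proof. exact: lin_funB (polar_linear_l z) x y. Qed.
Lemma polarDr x y z : B z (x + y) = B z x + B z y. Proof. by rewrite !(polarC z) polarDl. Qed.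
Lemma polarZr a x z : B z (a *: x) = a * B z x. Proof. by rewrite !(polarC z) polarZl. Qed.
Lemma polar0r z : B z 0 = 0. Proof. by rewrite polarC polar0l. Qed.
Lemma polarNr x z : B z (- x) = - B z x. Proof. by rewrite !(polarC z) polarNl. Qed.
Lemma polarBr x y z : B z (x - y) = B z x - B z y. Proof. by rewrite !(polarC z) polarBl. Qed.
Lemma polarxx x : B x x = 2 * N x.
Proof. by rewrite /polar -{1 2}(scale1r x) -scalerDl normZ; ring. Qed.

Lemma eq_polar x y : (forall z, B x z = B y z) -> x = y.
Proof.
move=> h; apply/eqP; rewrite -subr_eq0; apply/eqP/polar_nondeg => z.
by rewrite polarBl h subrr.
Qed.

Lemma norm1 : N one = 1.
Proof.
have N1_idem : N one = N one * N one by rewrite -norm_mul cmul1l.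
have [N10|N1_neq0] := eqVneq (N one) 0.
  have N_eq0 z : N z = 0 by rewrite -(cmul1l z) norm_mul N10 mul0r.
  have := @polar_nondeg (const_mx 1) (fun y => ltac:(rewrite /polar !N_eq0; ring)).
  by move/rowP/(_ (Ordinal n_gt0))/eqP; rewrite !mxE oner_eq0.
by apply: (mulfI N1_neq0); rewrite mulr1 -N1_idem.
Qed.

Lemma polar_mul2l x y z : B (x ** y) (x ** z) = N x * B y z.
Proof.
have := norm_mul x (y + z); rewrite cmulDr !normD !norm_mul => h.
by apply: (@addrI _ (N x * N y + N x * N z)); rewrite h; ring.
Qed.

(* The polarization of [polar_mul2l] in [x]. *)
Lemma polar_mul_exchange x y w z :
  B (x ** y) (w ** z) + B (x ** z) (w ** y) = B x w * B y z.
Proof.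
have := polar_mul2l (x + w) y z; rewrite !cmulDl !polarDl !polarDr !polar_mul2l normD.
rewrite (polarC (x ** z)) => h.
apply: (@addrI _ (N x * B y z + N w * B y z)).
by transitivity ((N x + N w + B x w) * B y z); [rewrite -h | ]; ring.
Qed.

Lemma polar_mul2r x y z : B (x ** z) (y ** z) = B x y * N z.
Proof.
have := polar_mul_exchange x z y z; rewrite polarxx => h.
by apply: (mulfI two_neq0); rewrite mulr2n mulrDl !mul1r h; ring.
Qed.

Definition trace x := B x one.
Definition conj x := trace x *: one - x.

Lemma trace1 : trace one = 2. Proof. by rewrite /trace polarxx norm1 mulr1. Qed.

Lemma polar_mull x y z : B (x ** y) z = B y (conj x ** z).
Proof.
have := polar_mul_exchange x y one z; rewrite !cmul1l => h.
rewrite /conj cmulBl cmulZl cmul1l polarBr polarZr /trace (polarC y (x ** z)) -h; ring.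
Qed.

Lemma polar_mulr x y z : B (x ** y) z = B x (z ** conj y).
Proof.
have := polar_mul_exchange x y z one; rewrite !cmul1r => h.
rewrite /conj cmulBr cmulZr cmul1r polarBr polarZr /trace mulrC -h; ring.
Qed.

Lemma trace_conj x : trace (conj x) = trace x.
Proof. by rewrite /trace /conj polarBl polarZl -/(trace one) trace1 -/(trace x); ring. Qed.

Lemma conjK x : conj (conj x) = x.
Proof. by rewrite {1}/conj trace_conj /conj opprB addrC subrK. Qed.

Lemma conj_linear : linear conj.
Proof.
move=> a x y; rewrite /conj /trace polarDl polarZl scalerDl -scalerA scalerBr.
by rewrite opprD !addrA; congr (_ + _); rewrite -!addrA; congr (_ + _); rewrite addrC.
Qed.

Lemma conjD x y : conj (x + y) = conj x + conj y. Proof. exact: lin_funD conj_linear x y. Qed.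
Lemma conj1 : conj one = one. Proof. by rewrite /conj trace1 scaler_nat mulr2n addrK. Qed.

Lemma polar_conj x y : B (conj x) y = B x (conj y).
Proof.
rewrite /conj polarBl polarBr polarZl polarZr /trace (polarC one); ring.
Qed.

Lemma norm_conj x : N (conj x) = N x.
Proof. by apply: (mulfI two_neq0); rewrite -!polarxx polar_conj conjK. Qed.

Lemma conj_mulK x y : conj x ** (x ** y) = N x *: y.
Proof. by apply: eq_polar => z; rewrite polar_mull conjK polar_mul2l polarZl. Qed.

Lemma mul_conjK x y : (y ** x) ** conj x = N x *: y.
Proof. by apply: eq_polar => z; rewrite polar_mulr conjK polar_mul2r polarZl mulrC. Qed.

Lemma mul_conjr x : x ** conj x = N x *: one.
Proof. by rewrite -mul_conjK cmul1l. Qed.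

Lemma mul_conj_polar x y : x ** conj y + y ** conj x = B x y *: one.
Proof.
have := mul_conjr (x + y).
rewrite conjD cmulDl !(cmulDr (conj x) (conj y)) !mul_conjr normD !scalerDl.
by rewrite (addrC (y ** conj x)) addrACA => /addrI.
Qed.

Lemma conj_mulK_polar u w y : conj u ** (w ** y) + conj w ** (u ** y) = B u w *: y.
Proof.
have := conj_mulK (u + w) y.
rewrite conjD (cmulDl u w y) cmulDr !(cmulDl (conj u) (conj w)) !conj_mulK normD !scalerDl.
by rewrite (addrC (conj u ** (w ** y))) addrACA => /addrI <-; rewrite addrC.
Qed.

Lemma conj_mul x y : conj (x ** y) = conj y ** conj x.
Proof.
apply: eq_polar => z.
by rewrite polar_conj polar_mull [RHS]polar_mull conjK (polarC (conj x)) polar_mulr.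
Qed.

Lemma conj_trace0 z : trace z = 0 -> conj z = - z.
Proof. by rewrite /conj => ->; rewrite scale0r add0r. Qed.

Lemma cmul_sqr x : x ** x = trace x *: x - N x *: one.
Proof.
have := mul_conjr x; rewrite /conj cmulBr cmulZr cmul1r => <-.
by rewrite opprB addrC subrK.
Qed.

Lemma polar_conj_trace0 x a : trace a = 0 -> B (conj x) a = - B x a.
Proof. by move=> Ta; rewrite polar_conj conj_trace0 // polarNr. Qed.


(* If [a] is orthogonal to [1], [x], [y] and the relevant product, then [x], [y] and [a]
   multiply as in a Cayley-Dickson double with [a] the new generator. *)
Lemma mul_perp_conj x a : trace a = 0 -> B x a = 0 -> x ** a = a ** conj x.
Proof.
move=> Ta Bxa; have := mul_conj_polar x a.
by rewrite conj_trace0 // cmulNr Bxa scale0r => /eqP; rewrite addrC subr_eq0 => /eqP.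
Qed.

Lemma mul_perp_conjl x a : trace a = 0 -> B x a = 0 -> a ** x = conj x ** a.
Proof.
by move=> Ta Bxa; rewrite -{1}(conjK x) -mul_perp_conj // polar_conj_trace0 // Bxa oppr0.
Qed.

Lemma cd_mul_l x y a : trace a = 0 -> B x a = 0 -> B y a = 0 -> B (y ** x) a = 0 ->
  x ** (y ** a) = (y ** x) ** a.
Proof.
move=> Ta Bxa Bya Byxa.
have := conj_mulK_polar (conj x) a (conj y).
rewrite conjK (conj_trace0 Ta) polar_conj_trace0 // Bxa oppr0 scale0r.
rewrite -mul_perp_conj // cmulNl (mul_perp_conjl (x := conj x ** conj y)) //; last first.
  by rewrite -conj_mul polar_conj_trace0 // Byxa oppr0.
by rewrite -conj_mul conjK => /eqP; rewrite subr_eq0 => /eqP.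
Qed.

Lemma cd_mul_r x y a : trace a = 0 -> B x a = 0 -> B y a = 0 -> B (x ** conj y) a = 0 ->
  (x ** a) ** y = (x ** conj y) ** a.
Proof.
move=> Ta Bxa Bya Bxya.
rewrite -(conjK ((x ** a) ** y)) -(conjK ((x ** conj y) ** a)); congr conj.
rewrite !conj_mul (conj_trace0 Ta) cmulNl -mul_perp_conj // cmulNr.
rewrite cd_mul_l //; last by rewrite polar_conj_trace0 // Bya oppr0.
by rewrite -(conj_mul x (conj y)) cmulNl -(mul_perp_conj (x := x ** conj y)).
Qed.

Lemma cd_mul_lr x y a : trace a = 0 -> B x a = 0 -> B (conj x ** y) a = 0 ->
  (x ** a) ** (y ** a) = - N a *: (conj y ** x).
Proof.
move=> Ta Bxa Bxya; apply: eq_polar => z.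
have Txa : trace (x ** a) = 0.
  by rewrite /trace polar_mull cmul1r polarC polar_conj_trace0 // Bxa oppr0.
rewrite polar_mull conj_trace0 // cmulNl polarNr.
have := polar_mul_exchange y a (x ** a) z.
have -> : B y (x ** a) = 0 by rewrite polarC polar_mull polarC.
have -> : (x ** a) ** a = - (N a *: x) by rewrite -mul_conjK (conj_trace0 Ta) cmulNr opprK.
rewrite mul0r polarNr polarZr polar_mull => /eqP; rewrite subr_eq0 => /eqP ->.
by rewrite polarZl (polar_mull (conj y)) conjK (polarC x); ring.
Qed.

Definition orth_family m (F : 'I_m -> V) :=
  (forall i j, i != j -> B (F i) (F j) = 0) /\ (forall i, N (F i) != 0).

Lemma polar_suml m (G : 'I_m -> V) z : B (\sum_i G i) z = \sum_i B (G i) z.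
Proof. by elim/big_rec2: _ => [|i y1 y2 _ <-]; rewrite ?polar0l ?polarDl. Qed.

Lemma polar_orth_sum m (F : 'I_m -> V) (c : 'I_m -> k) j :
  (forall i, i != j -> B (F i) (F j) = 0) ->
  B (\sum_i c i *: F i) (F j) = c j * B (F j) (F j).
Proof.
move=> orth; rewrite polar_suml (bigD1 j) //= big1 ?addr0 ?polarZl // => i ij.
by rewrite polarZl orth ?mulr0.
Qed.

Lemma orth_family_free m (F : 'I_m -> V) : orth_family F ->
  forall c : 'I_m -> k, \sum_i c i *: F i = 0 -> forall i, c i = 0.
Proof.
move=> [orth aniso] c sum0 i; have := polar_orth_sum c (fun j => orth j i).
rewrite sum0 polar0l polarxx => /eqP.
by rewrite eq_sym !mulf_eq0 (negbTE two_neq0) (negbTE (aniso i)) /= orbF => /eqP.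
Qed.

(* The form is nondegenerate, so F^perp cannot be totally isotropic: it would then
   be orthogonal to itself and to F, hence zero, while F does not span V. *)
Lemma exists_perp_anisotropic m (F : 'I_m -> V) : (m < n)%N -> orth_family F ->
  exists z, (forall i, B (F i) z = 0) /\ N z != 0.
Proof.
move=> lt_mn [orth aniso].
pose c z i := B z (F i) / B (F i) (F i).
pose pr z := z - \sum_i c z i *: F i.
have pr_perp z j : B (F j) (pr z) = 0.
  rewrite polarC polarBl polar_orth_sum => [|i ij]; last exact: orth.
  by rewrite /c mulfVK ?subrr // polarxx mulf_neq0.
case: (classic (exists z, (forall i, B (F i) z = 0) /\ N z != 0)) => // no_z.
have iso_perp w : (forall i, B (F i) w = 0) -> N w = 0.
  by move=> w_perp; have [//|Nw] := eqVneq (N w) 0; case: no_z; exists w.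
have pr0 z : pr z = 0.
  apply: polar_nondeg => y.
  have -> : y = pr y + \sum_i c y i *: F i by rewrite /pr subrK.
  rewrite polarDr [B (pr z) (\sum_i _)]polarC polar_suml big1 => [|i _]; last first.
    by rewrite polarZl pr_perp mulr0.
  rewrite addr0 /polar !iso_perp ?subrr // => i.
  by rewrite polarDr !pr_perp addr0.
have [z z_notin] := exists_notin_span F lt_mn.
by move: (z_notin (c z)); rewrite -subr_eq0 -/(pr z) pr0 eqxx.
Qed.

Implicit Type D : cd_algebra k.

Definition cd_embedding D (e : D -> V) :=
  [/\ linear e, {morph e : p q / cd_mul p q >-> p ** q},
      {morph e : p / cd_conj p >-> conj p},
      forall p q, B (e p) (e q) = cd_polar p q & e (cd_one D) = one].
Arguments cd_embedding : clear implicits.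

Definition cd_extend D (e : D -> V) (g : k) (a : V) (P : cd_double D g) : V :=
  e P.1 + e P.2 ** a.
Arguments cd_extend {D} e g a P.

Definition scalar_embedding (x : cd_scalars k) : V := x *: one.

Lemma cd_embedding_scalars : cd_embedding (cd_scalars k) scalar_embedding.
Proof.
rewrite /scalar_embedding; split => /=.
- by move=> r x y; rewrite scalerDl scalerA.
- by move=> x y; rewrite cmulZl cmulZr cmul1l scalerA mulrC.
- by move=> x; rewrite (lin_funZ conj_linear) conj1.
- by move=> x y; rewrite polarZl polarZr polarxx norm1; ring.
- by rewrite scale1r.
Qed.

(* The second clause is the form of "[e \o bs] spans the image of [e]" that survives
   [cd_extend]. *)
Definition orth_basis D (e : D -> V) m (bs : 'I_m -> D) :=
  orth_family (e \o bs) /\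
  (forall z, (forall i, B (e (bs i)) z = 0) -> forall p, B (e p) z = 0).

Definition cd_basis D m (bs : 'I_m -> D) (i : 'I_(m + m)) : D * D :=
  match split i with inl j => (bs j, 0) | inr j => (0, bs j) end.

Lemma orth_basis_scalars :
  orth_basis scalar_embedding (fun _ : 'I_1 => cd_one (cd_scalars k)).
Proof.
rewrite /scalar_embedding; split; first split.
- by move=> i j; rewrite !ord1 eqxx.
- by move=> i /=; rewrite scale1r norm1 oner_eq0.
- by move=> z /(_ ord0) /=; rewrite scale1r => z_perp p; rewrite polarZl z_perp mulr0.
Qed.

Section Extension.
Variables (D : cd_algebra k) (e : D -> V) (a : V).
Hypothesis e_emb : cd_embedding D e.
Hypothesis a_perp : forall p, B (e p) a = 0.

Lemma cd_embedding_trace0 : trace a = 0.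
Proof. by case: e_emb => _ _ _ _ eo; rewrite /trace polarC -eo a_perp. Qed.

Lemma cd_embedding_perp p q : B (e p ** a) (e q) = 0.
Proof. by case: e_emb => _ em ec _ _; rewrite polar_mull -ec -em polarC a_perp. Qed.

Lemma cd_embedding_double : cd_embedding (cd_double D (N a)) (cd_extend e (N a) a).
Proof.
have [el em ec ep eo] := e_emb; have Ta := cd_embedding_trace0.
rewrite /cd_extend; split => /=.
- move=> r [P1 P2] [Q1 Q2] /=.
  by rewrite !el cmulDl cmulZl; apply/rowP => i; rewrite !mxE; ring.
- move=> [P1 P2] [Q1 Q2] /=.
  rewrite cmulDl !cmulDr.
  rewrite (cd_mul_l (x := e P1) (y := e Q2)) // -?em //.
  rewrite (cd_mul_r (x := e P2) (y := e Q1)) // -?ec -?em //.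
  rewrite (cd_mul_lr (x := e P2) (y := e Q2)) // -?ec -?em //.
  rewrite (lin_funB el) !(lin_funD el) (lin_funZ el) !em ec (cmulDl _ _ a).
  by apply/rowP => i; rewrite !mxE; ring.
- move=> [P1 P2] /=.
  rewrite (lin_funN el) cmulNl ec conjD (conj_trace0 (z := e P2 ** a)) //.
  by rewrite /trace -eo cd_embedding_perp.
- move=> [P1 P2] [Q1 Q2] /=; rewrite !polarDl !polarDr !ep cd_embedding_perp.
  by rewrite polarC cd_embedding_perp polar_mul2r ep; ring.
- by rewrite eo (lin_fun0 el) cmul0l addr0.
Qed.

Lemma orth_basis_double m (bs : 'I_m -> D) : N a != 0 ->
  orth_basis e bs -> orth_basis (cd_extend e (N a) a) (cd_basis bs).
Proof.
move=> Na_neq0 [[orth aniso] span]; have [el _ _ _ _] := e_emb.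
have ext i : cd_extend e (N a) a (cd_basis bs i) =
    match split i with inl j => e (bs j) | inr j => e (bs j) ** a end.
  rewrite /cd_basis /cd_extend; case: (split i) => j /=;
    by rewrite (lin_fun0 el) ?cmul0l ?addr0 ?add0r.
split; first split.
- move=> i j /=; rewrite !ext -[i]splitK -[j]splitK !unsplitK.
  case: (split i) (split j) => [i1|i2] [j1|j2] /= ij.
  + by apply: orth; apply: contraNneq ij => ->.
  + by rewrite polarC cd_embedding_perp.
  + by rewrite cd_embedding_perp.
  + by rewrite polar_mul2r orth ?mul0r //; apply: contraNneq ij => ->.
- by move=> i /=; rewrite ext; case: (split i) => j; rewrite ?norm_mul ?mulf_neq0 ?aniso.
- move=> z z_perp [p q]; rewrite /cd_extend /= polarDl.
  have perp_l j : B (e (bs j)) z = 0.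
    by have := z_perp (lshift m j); rewrite ext (unsplitK (inl j)).
  have perp_r j : B (e (bs j) ** a) z = 0.
    by have := z_perp (rshift m j); rewrite ext (unsplitK (inr j)).
  rewrite (span z perp_l) polar_mulr (span (z ** conj a)) ?addr0 // => j.
  by rewrite -polar_mulr perp_r.
Qed.

End Extension.

Lemma cd_embedding_surj D e m (bs : 'I_m -> D) : cd_embedding D e -> orth_basis e bs ->
  (n <= m)%N -> forall z, exists p, z = e p.
Proof.
move=> [el _ _ _ _] [oF _] le_nm z.
have [c ->] := free_family_spans le_nm (orth_family_free oF) z.
exists (\sum_i c i *: bs i); rewrite (lin_fun_sum el); apply: eq_bigr => i _.
by rewrite (lin_funZ el).
Qed.

Lemma exists_perp_image D (e : D -> V) m (bs : 'I_m -> D) :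
  orth_basis e bs -> (m < n)%N ->
  exists z, (forall p, B (e p) z = 0) /\ N z != 0.
Proof.
move=> [oF span] lt_mn; have [z [z_perp Nz]] := exists_perp_anisotropic lt_mn oF.
by exists z; split => //; apply: span.
Qed.

Lemma cd_double_nondeg D e g : cd_embedding D e -> cd_nondeg D -> g != 0 ->
  cd_nondeg (cd_double D g).
Proof.
move=> [el _ _ ep _] nondeg g_neq0 [p q] /= P_perp.
have polar_0r (r : D) : cd_polar r 0 = 0 by rewrite -ep (lin_fun0 el) polar0r.
have polar_0l (r : D) : cd_polar 0 r = 0 by rewrite -ep (lin_fun0 el) polar0l.
have -> : p = 0 by apply: nondeg => r; have := P_perp (r, 0); rewrite /= polar_0r mulr0 addr0.
suff -> : q = 0 by [].
apply: nondeg => r; have := P_perp (0, r); rewrite /= polar_0r add0r => /eqP.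
by rewrite mulf_eq0 (negbTE g_neq0) => /eqP.
Qed.

Lemma cd_embedding_inj D e : cd_embedding D e -> cd_nondeg D -> injective e.
Proof.
move=> [el _ _ ep _] nondeg p q epq; apply/eqP; rewrite -subr_eq0; apply/eqP/nondeg => r.
by rewrite -ep (lin_funB el) epq subrr polar0l.
Qed.

Lemma cd_embedding_aut D e e' : cd_embedding D e -> cd_embedding D e' ->
  bijective e -> bijective e' ->
  exists phi, is_alg_aut mul one phi /\ forall p, phi (e p) = e' p.
Proof.
move=> [el em _ _ eo] [el' em' _ _ eo'] [g eK gK] [g' e'K g'K].
have g_lin : linear g by move=> r x y; apply: (can_inj eK); rewrite el !gK.
exists (e' \o g); split => [|p]; last by rewrite /= eK.
split => /=.
- by move=> r x y /=; rewrite g_lin el'.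
- by exists (e \o g') => z /=; rewrite ?e'K ?gK ?eK ?g'K.
- by rewrite -eo eK eo'.
- by move=> x y /=; rewrite -{1}(gK x) -{1}(gK y) -em eK em'.
Qed.

Definition based_embedding D (e : D -> V) m (bs : 'I_m -> D) :=
  [/\ cd_embedding D e, cd_nondeg D & orth_basis e bs].

Lemma based_scalars :
  based_embedding scalar_embedding (fun _ : 'I_1 => cd_one (cd_scalars k)).
Proof.
split; [exact: cd_embedding_scalars | exact: cd_scalars_nondeg | exact: orth_basis_scalars].
Qed.

Lemma based_double D e m (bs : 'I_m -> D) a : based_embedding e bs ->
  (forall p, B (e p) a = 0) -> N a != 0 ->
  based_embedding (cd_extend e (N a) a) (cd_basis bs).
Proof.
move=> [e_emb nondeg basis] a_perp Na_neq0; split.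
- exact: cd_embedding_double.
- exact: cd_double_nondeg e_emb nondeg Na_neq0.
- exact: orth_basis_double.
Qed.

Lemma based_embedding_bij D e m (bs : 'I_m -> D) : based_embedding e bs -> (n <= m)%N ->
  bijective e.
Proof.
move=> [e_emb nondeg basis] le_nm; apply: inj_surj_bij.
  exact: cd_embedding_inj nondeg.
exact: cd_embedding_surj basis le_nm.
Qed.

Lemma exists_polar_neq0 x : x != 0 -> exists y, B x y != 0.
Proof.
move=> x_neq0; case: (classic (exists y, B x y != 0)) => // no_y.
case/eqP: x_neq0; apply: polar_nondeg => y.
by apply/eqP/negPn/negP => Bxy; apply: no_y; exists y.
Qed.

Lemma norm_isotropic_line r s t : N r = 0 -> B r s != 0 ->
  N (((t - N s) / B r s) *: r + s) = t.
Proof.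
by move=> Nr Brs; rewrite normD normZ Nr mulr0 add0r polarZl divfK // addrC subrK.
Qed.

Lemma cd_extend_fst D (e : D -> V) g a p : linear e -> cd_extend e g a (p, 0) = e p.
Proof. by move=> el; rewrite /cd_extend /= (lin_fun0 el) cmul0l addr0. Qed.

Definition emb1 v := cd_extend scalar_embedding (N v) v.
Arguments emb1 : clear implicits.
Definition emb2 v a := cd_extend (emb1 v) (N a) a.
Arguments emb2 : clear implicits.
Definition emb3 v a b := cd_extend (emb2 v a) (N b) b.
Arguments emb3 : clear implicits.

Definition basis1 c : 'I_2 -> cd_double (cd_scalars k) c :=
  cd_basis (fun _ : 'I_1 => cd_one (cd_scalars k)).
Definition basis2 c al : 'I_4 -> cd_double (cd_double (cd_scalars k) c) al :=
  cd_basis (basis1 c).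
Definition basis3 c al be :
    'I_8 -> cd_double (cd_double (cd_double (cd_scalars k) c) al) be :=
  cd_basis (basis2 c al).

(* Each of [v], [a], [b] is orthogonal to the subalgebra generated by its predecessors, so
   that [1, v, a, b] give three successive Cayley-Dickson doublings. *)
Definition frame v a b :=
  [/\ trace v = 0, forall p, B (emb1 v p) a = 0 & forall p, B (emb2 v a p) b = 0].

Lemma based_emb1 v : trace v = 0 -> N v != 0 -> based_embedding (emb1 v) (basis1 (N v)).
Proof.
move=> Tv Nv; apply: based_double based_scalars _ Nv => p.
by rewrite /scalar_embedding polarZl polarC -/(trace v) Tv mulr0.
Qed.

Lemma based_emb2 v a : trace v = 0 -> (forall p, B (emb1 v p) a = 0) ->
  N v != 0 -> N a != 0 -> based_embedding (emb2 v a) (basis2 (N v) (N a)).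
Proof. by move=> Tv a_perp Nv Na; apply: based_double (based_emb1 Tv Nv) a_perp Na. Qed.

Lemma based_emb3 v a b : frame v a b -> N v != 0 -> N a != 0 -> N b != 0 ->
  based_embedding (emb3 v a b) (basis3 (N v) (N a) (N b)).
Proof.
move=> [Tv a_perp b_perp] Nv Na Nb.
exact: based_double (based_emb2 Tv a_perp Nv Na) b_perp Nb.
Qed.

Lemma emb3_surj v a b : (n <= 8)%N -> frame v a b -> N v != 0 -> N a != 0 -> N b != 0 ->
  forall z, exists P, z = emb3 v a b P.
Proof.
move=> le_n8 fr Nv Na Nb; have [e_emb _ basis] := based_emb3 fr Nv Na Nb.
exact: cd_embedding_surj e_emb basis le_n8.
Qed.

Lemma cd_extend3_v c al be v a b :
  cd_extend (cd_extend (cd_extend scalar_embedding c v) al a) be b (((0, 1), 0), 0) = v.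
Proof.
by rewrite /cd_extend /scalar_embedding /= !(scale0r, scale1r, cmul1l, cmul0l, addr0, add0r).
Qed.

(* Two anisotropic frames with the same norms generate isomorphic Cayley-Dickson algebras;
   composing the two embeddings gives an automorphism. *)
Lemma frame_aut v a b v' a' b' : (n <= 8)%N -> frame v a b -> frame v' a' b' ->
  N v != 0 -> N a != 0 -> N b != 0 -> N v' = N v -> N a' = N a -> N b' = N b ->
  exists phi, is_alg_aut mul one phi /\ phi v = v'.
Proof.
move=> le_n8 fr fr' Nv Na Nb ev ea eb.
have based := based_emb3 fr Nv Na Nb; have [e_emb _ _] := based.
have := based_emb3 fr'; rewrite /emb3 /emb2 /emb1 ev ea eb => /(_ Nv Na Nb) based'.
have [e'_emb _ _] := based'.
have [phi [aut phiE]] := cd_embedding_aut e_emb e'_emb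
  (based_embedding_bij based le_n8) (based_embedding_bij based' le_n8).
exists phi; split => //.
by rewrite -{1}(cd_extend3_v (N v) (N a) (N b) v a b) phiE cd_extend3_v.
Qed.

(* Write an isotropic vector as [x + y b0] with quaternions [x], [y]. If [N y != 0] then
   [y conj x / N x] has norm [-1 / N b0]; otherwise the quaternion norm is isotropic, hence
   universal. *)
Lemma exists_quaternion_norm v a b0 : (n <= 8)%N -> isotropic N -> frame v a b0 ->
  N v != 0 -> N a != 0 -> N b0 != 0 -> exists Q, N (emb2 v a Q) * N b0 = -1.
Proof.
move=> le_n8 [z0 [z0_neq0 Nz0]] fr Nv Na Nb0; have [Tv a_perp b0_perp] := fr.
have [e2_emb _ _] := based_emb2 Tv a_perp Nv Na; have [el em ec _ _] := e2_emb.
have perp := cd_embedding_perp e2_emb b0_perp.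
have e3_surj := emb3_surj le_n8 fr Nv Na Nb0.
have [[p q] z0E] := e3_surj z0; rewrite /emb3 /cd_extend /= in z0E.
set x := emb2 v a p in z0E; set y := emb2 v a q in z0E.
have Nxy : N x + N y * N b0 = 0 by rewrite -Nz0 z0E normD norm_mul polarC perp addr0.
have [Ny0|Ny] := eqVneq (N y) 0; last first.
  have Nyb0 : N y * N b0 = - N x by apply/eqP; rewrite -addr_eq0 addrC Nxy.
  have Nx_neq0 : N x != 0 by rewrite -oppr_eq0 -Nyb0 mulf_neq0.
  exists ((N x)^-1 *: cd_mul q (cd_conj p)).
  rewrite (lin_funZ el) em ec normZ norm_mul norm_conj -/x -/y.
  transitivity ((N x)^-1 ^+ 2 * N x * (N y * N b0)); first by ring.
  by rewrite Nyb0; field.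
have [r [r_neq0 Nr]] : exists r, emb2 v a r != 0 /\ N (emb2 v a r) = 0.
  have Nx0 : N x = 0 by move: Nxy; rewrite Ny0 mul0r addr0.
  have [x0|x_neq0] := eqVneq x 0; last by exists p.
  exists q; split => //; apply: contraNneq z0_neq0 => y0.
  by rewrite z0E x0 /y y0 cmul0l addr0.
have [u Bru] := exists_polar_neq0 r_neq0.
have [[s1 s2] uE] := e3_surj u.
move: Bru; rewrite uE /emb3 /cd_extend /= polarDr (polarC _ (_ ** b0)) perp addr0 => Bru.
exists (((- (N b0)^-1 - N (emb2 v a s1)) / B (emb2 v a r) (emb2 v a s1)) *: r + s1).
by rewrite el norm_isotropic_line //; field.
Qed.

Lemma extend_frame v a : (4 < n)%N -> (n <= 8)%N -> isotropic N ->
  trace v = 0 -> (forall p, B (emb1 v p) a = 0) -> N v != 0 -> N a != 0 ->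
  exists b, frame v a b /\ N b = -1.
Proof.
move=> lt_4n le_n8 iso Tv a_perp Nv Na.
have based2 := based_emb2 Tv a_perp Nv Na; have [e2_emb _ basis2] := based2.
have [b0 [b0_perp Nb0]] := exists_perp_image basis2 lt_4n.
have [Q NQ] := exists_quaternion_norm le_n8 iso (And3 Tv a_perp b0_perp) Nv Na Nb0.
exists (emb2 v a Q ** b0); split; last by rewrite norm_mul.
by split => // p; rewrite polarC cd_embedding_perp.
Qed.

Lemma frame_exists v : n = 8 -> isotropic N -> trace v = 0 -> N v != 0 ->
  exists a b, [/\ frame v a b, N a = -1 & N b = -1].
Proof.
move=> n8 iso Tv Nv; have [e1_emb _ e1_basis] := based_emb1 Tv Nv.
have lt_2n : (2 < n)%N by rewrite n8.
have lt_4n : (4 < n)%N by rewrite n8.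
have le_n8 : (n <= 8)%N by rewrite n8.
have [a0 [a0_perp Na0]] := exists_perp_image e1_basis lt_2n.
have [a [[_ _ a_perp] Na]] := extend_frame lt_4n le_n8 iso Tv a0_perp Nv Na0.
have {}a_perp p : B (emb1 v p) a = 0.
  by have := a_perp (p, 0); rewrite /emb2 cd_extend_fst //; case: e1_emb.
have Na_neq0 : N a != 0 by rewrite Na oppr_eq0 oner_eq0.
have [b [fr Nb]] := extend_frame lt_4n le_n8 iso Tv a_perp Nv Na_neq0.
by exists a, b.
Qed.

Lemma frame_norm_surj v a b : frame v a b -> N v != 0 -> N a = -1 -> N b = -1 ->
  forall c, exists w, trace w = 0 /\ N w = c.
Proof.
move=> fr Nv Na Nb c.
have Na_neq0 : N a != 0 by rewrite Na oppr_eq0 oner_eq0.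
have Nb_neq0 : N b != 0 by rewrite Nb oppr_eq0 oner_eq0.
have [[_ _ _ ep eo] _ _] := based_emb3 fr Nv Na_neq0 Nb_neq0.
(* [w = (c - 1) / 2 b + (c + 1) / 2 a b] in the hyperbolic plane spanned by [b] and [a b] *)
exists (emb3 v a b (0, (((c - 1) / 2, 0), ((c + 1) / 2, 0)))); split.
  by rewrite /trace -eo ep /= Na Nb; field.
by apply: (mulfI two_neq0); rewrite -polarxx ep /= Na Nb; field.
Qed.

Lemma exists_trace0_anisotropic : (1 < n)%N -> exists u, trace u = 0 /\ N u != 0.
Proof.
move=> lt_1n; have [u [u_perp Nu]] := exists_perp_image orth_basis_scalars lt_1n.
by exists u; split => //; have := u_perp 1; rewrite /scalar_embedding scale1r polarC.
Qed.

Lemma alg_aut_norm phi : is_alg_aut mul one phi -> forall x, N (phi x) = N x.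
Proof.
move=> [phi_lin [psi phiK _] phi1 phiM] x.
have := phiM x x; rewrite !cmul_sqr (lin_funB phi_lin) !(lin_funZ phi_lin) phi1 => phi_sqr.
have phi_sq : (trace (phi x) - trace x) *: phi x = (N (phi x) - N x) *: one.
  apply/eqP; rewrite -subr_eq0; apply/eqP.
  transitivity ((trace (phi x) *: phi x - N (phi x) *: one) -
                (trace x *: phi x - N x *: one)).
    by apply/rowP => i; rewrite !mxE; ring.
  by rewrite -phi_sqr subrr.
have [Tx|Tx_neq] := eqVneq (trace (phi x)) (trace x).
  move: phi_sq; rewrite Tx subrr scale0r => /esym/eqP; rewrite scaler_eq0 subr_eq0.
  case/orP => [/eqP //|/eqP one0].
  by move: norm1; rewrite one0 norm0 => /eqP; rewrite eq_sym oner_eq0.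
pose mu := (N (phi x) - N x) / (trace (phi x) - trace x).
have phixE : phi x = mu *: one.
  by rewrite /mu mulrC -scalerA -phi_sq scalerA mulVf ?scale1r // subr_eq0.
have xE : x = mu *: one by apply: (can_inj phiK); rewrite phixE (lin_funZ phi_lin) phi1.
by rewrite phixE [in RHS]xE.
Qed.
End CompositionAlgebra.

Arguments emb1 {k n} mul one N v _.

Section TwoDimensional.
Variable k : fieldType.
Hypothesis two_neq0 : (2 : k) != 0.

Lemma scale_regularE (a : k) (x : k^o) : a *: x = a * x. Proof. by []. Qed.

Definition row2 (p : k^o * k^o) : 'rV[k]_2 := \row_(i < 2) if i == ord0 then p.1 else p.2.
Definition unrow2 (x : 'rV[k]_2) : k^o * k^o := (x 0 ord0, x 0 ord_max).

Lemma row2_eq (x y : 'rV[k]_2) : x 0 ord0 = y 0 ord0 -> x 0 ord_max = y 0 ord_max -> x = y.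
Proof.
move=> eq0 eq1; apply/rowP => i.
by have [->|->] : i = ord0 \/ i = ord_max by case: i => [[|[|//]] ?]; [left|right]; apply: val_inj.
Qed.

Lemma row2K p : unrow2 (row2 p) = p. Proof. by case: p => x y; rewrite /unrow2 !mxE. Qed.
Lemma unrow2K x : row2 (unrow2 x) = x. Proof. by apply: row2_eq; rewrite !mxE. Qed.

Lemma row2_linear : linear row2.
Proof. by move=> r [x1 x2] [y1 y2]; apply: row2_eq; rewrite !mxE. Qed.

(* [k[u]/(u^2 + c)] with basis [1, u] and norm [x^2 + c y^2]. *)
Definition quad_alg (c : k) : alg2 k :=
  Alg2 (fun x y => row2 (@cd_mul _ (cd_double (cd_scalars k) c) (unrow2 x) (unrow2 y)))
       (row2 (1, 0)) (fun x => x 0 ord0 ^+ 2 + c * x 0 ord_max ^+ 2).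

Lemma quad_alg_mulE c (p q : cd_double (cd_scalars k) c) :
  a2_mul (quad_alg c) (row2 p) (row2 q) = row2 (cd_mul p q).
Proof. by rewrite -[p in RHS]row2K -[q in RHS]row2K. Qed.

Lemma quad_alg_comp c : c != 0 -> is_comp_alg2 (quad_alg c).
Proof.
move=> c_neq0; split => /=.
- by split=> a x y z; apply: row2_eq; rewrite !mxE /= ?scale_regularE; ring.
- by move=> x; split; apply: row2_eq; rewrite !mxE /= ?scale_regularE; ring.
- by split=> [a x|a x y z]; rewrite /polar !mxE /=; ring.
- move=> x x_perp; apply: row2_eq; rewrite mxE.
    have := x_perp (row2 (1, 0)); rewrite /polar !mxE /= => h.
    by apply: (mulfI two_neq0); rewrite mulr0 -h; ring.
  have := x_perp (row2 (0, 1)); rewrite /polar !mxE /= => h.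
  by apply: (mulfI (mulf_neq0 two_neq0 c_neq0)); rewrite mulr0 -h; ring.
- by move=> x y; rewrite !mxE /= ?scale_regularE; ring.
Qed.

Lemma sq_class_quad_alg_iso c c' : same_sq_class c c' -> alg2_iso (quad_alg c) (quad_alg c').
Proof.
move=> [t [t_neq0 ->]]; exists (fun x => row2 (x 0 ord0, t * x 0 ord_max)); split => /=.
- by move=> r x y; apply: row2_eq; rewrite !mxE /= ?scale_regularE; ring.
- exists (fun x : 'rV[k]_2 => row2 (x 0 ord0, t^-1 * x 0 ord_max)) => x; apply: row2_eq;
    by rewrite !mxE //= mulrA ?mulVf ?mulfV ?mul1r.
- by apply: row2_eq; rewrite !mxE /= ?mulr0.
- by move=> x y; apply: row2_eq; rewrite !mxE /= ?scale_regularE; ring.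
Qed.

(* An isomorphism maps [u] to [a + b u] with [(a + b u)^2 = -c]; this forces [a = 0]
   and [c = b^2 c']. *)
Lemma quad_alg_iso_sq_class c c' : alg2_iso (quad_alg c) (quad_alg c') -> same_sq_class c c'.
Proof.
move=> [f [f_lin [g fK _] f1 fM]].
have fZ r : f (r *: a2_one (quad_alg c)) = r *: a2_one (quad_alg c') :=
  etrans (lin_funZ f_lin _ _) (congr1 _ f1).
pose u := row2 (0, 1).
have := fM u u; have -> : a2_mul (quad_alg c) u u = (- c) *: a2_one (quad_alg c).
  by apply: row2_eq; rewrite /u /= !mxE /= ?scale_regularE; ring.
rewrite fZ => fuu.
have := congr1 (fun x : 'rV[k]_2 => x 0 ord0) fuu.
have := congr1 (fun x : 'rV[k]_2 => x 0 ord_max) fuu.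
rewrite /= !mxE /=; set a := f u 0 ord0; set b := f u 0 ord_max => eq1 eq0.
have [b0|b_neq0] := eqVneq b 0.
  suff : u = a *: a2_one (quad_alg c).
    move/(congr1 (fun x : 'rV[k]_2 => x 0 ord_max)).
    by rewrite /u /= !mxE /= mulr0 => /eqP; rewrite oner_eq0.
  by apply: (can_inj fK); rewrite fZ; apply: row2_eq; rewrite /= !mxE /= ?mulr1 ?mulr0.
have a0 : a = 0.
  apply: (mulfI (mulf_neq0 two_neq0 b_neq0)); rewrite mulr0.
  by transitivity (b * a + b * a); [ring | rewrite -eq1 mulr0].
by exists b; split => //; apply: oppr_inj; rewrite -[LHS]mulr1 eq0 a0 scale_regularE; ring.
Qed.

Lemma comp_alg2_quad (A : alg2 k) : is_comp_alg2 A ->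
  exists c, c != 0 /\ alg2_iso A (quad_alg c).
Proof.
have two_gt0 : (0 < 2)%N by [].
move=> hA; have [u [Tu Nu]] := exists_trace0_anisotropic two_neq0 two_gt0 hA (isT : (1 < 2)%N).
have based := based_emb1 two_neq0 two_gt0 hA Tu Nu; have [[el em _ _ eo] _ _] := based.
have [g eK gK] := based_embedding_bij two_neq0 hA based (leqnn 2).
have g_lin : linear g by move=> r x y; apply: (can_inj eK); rewrite el !gK.
exists (a2_N A u); split => //; exists (row2 \o g); split.
- by move=> r x y /=; rewrite g_lin row2_linear.
- exists (emb1 (a2_mul A) (a2_one A) (a2_N A) u \o unrow2) => x /=.
    by rewrite row2K gK.
  by rewrite eK unrow2K.
- by rewrite /= -eo eK.
- by move=> x y; rewrite /comp quad_alg_mulE -{1}(gK x) -{1}(gK y) -em eK.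
Qed.

End TwoDimensional.

Lemma same_sq_class_refl (k : fieldType) (c : k) : same_sq_class c c.
Proof. by exists 1; rewrite oner_eq0 expr1n mul1r. Qed.

Section SplitOctonions.
Variables (k : fieldType) (mul : 'rV[k]_8 -> 'rV[k]_8 -> 'rV[k]_8) (one : 'rV[k]_8).
Variable N : 'rV[k]_8 -> k.
Hypothesis two_neq0 : (2 : k) != 0.
Hypothesis hO : is_octonion_algebra mul one N.
Hypothesis N_iso : isotropic N.

Let eight_gt0 : (0 < 8)%N. Proof. by []. Qed.

Lemma trace_VC v : in_VC one N v -> trace one N v = 0.
Proof. by rewrite /in_VC /trace polarC. Qed.

Lemma same_orbit_sq_class v w : same_orbit mul one v w -> same_sq_class (N v) (N w).
Proof.
move=> [phi [a [aut a_neq0 ->]]]; exists a^-1; split; first by rewrite invr_eq0.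
by rewrite (normZ hO) (alg_aut_norm two_neq0 eight_gt0 hO aut); field.
Qed.

(* [v] and [t w] have the same norm and extend to frames with norms [N v, -1, -1]. *)
Lemma sq_class_same_orbit v w : in_VCss one N v -> in_VCss one N w ->
  same_sq_class (N v) (N w) -> same_orbit mul one v w.
Proof.
move=> [vC Nv] [wC Nw] [t [t_neq0 Nvw]].
have Ttw : trace one N (t *: w) = 0.
  by rewrite /trace (polarZl hO) -/(trace one N w) trace_VC ?mulr0.
have Ntw : N (t *: w) = N v by rewrite (normZ hO) Nvw.
have Ntw_neq0 : N (t *: w) != 0 by rewrite Ntw.
have [a [b [fr Na Nb]]] := frame_exists two_neq0 eight_gt0 hO erefl N_iso (trace_VC vC) Nv.
have [a' [b' [fr' Na' Nb']]] := frame_exists two_neq0 eight_gt0 hO erefl N_iso Ttw Ntw_neq0.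
have Na_neq0 : N a != 0 by rewrite Na oppr_eq0 oner_eq0.
have Nb_neq0 : N b != 0 by rewrite Nb oppr_eq0 oner_eq0.
have [phi [aut phi_v]] := frame_aut two_neq0 eight_gt0 hO (leqnn 8) fr fr' Nv Na_neq0 Nb_neq0
  Ntw (etrans Na' (esym Na)) (etrans Nb' (esym Nb)).
exists phi, t^-1; split; rewrite ?invr_eq0 //.
by rewrite phi_v scalerA mulVf ?scale1r.
Qed.

Lemma exists_VCss_norm c : c != 0 -> exists v, in_VCss one N v /\ N v = c.
Proof.
move=> c_neq0.
have [u [Tu Nu]] := exists_trace0_anisotropic two_neq0 eight_gt0 hO (isT : (1 < 8)%N).
have [a [b [fr Na Nb]]] := frame_exists two_neq0 eight_gt0 hO erefl N_iso Tu Nu.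
have [w [Tw Nw]] := frame_norm_surj two_neq0 eight_gt0 hO fr Nu Na Nb c.
by exists w; split => //; split; [rewrite /in_VC polarC | rewrite Nw].
Qed.

End SplitOctonions.

Theorem theorem5p10 (k : fieldType) (hk : 2 \notin [pchar k])
    (mul : 'rV[k]_8 -> 'rV[k]_8 -> 'rV[k]_8) (one : 'rV[k]_8)
    (N : 'rV[k]_8 -> k)
    (hC : is_split_octonion_algebra mul one N) :
  [/\ (forall v w, in_VCss one N v -> in_VCss one N w ->
         same_orbit mul one v w -> same_sq_class (N v) (N w)),
      (forall v w, in_VCss one N v -> in_VCss one N w ->
         same_sq_class (N v) (N w) -> same_orbit mul one v w),
      (forall c : k, c != 0 -> exists v, in_VCss one N v /\ same_sq_class (N v) c)
    & exists F : 'rV[k]_8 -> alg2 k,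
        [/\ forall v, in_VCss one N v -> is_comp_alg2 (F v),
            forall v w, in_VCss one N v -> in_VCss one N w ->
              (same_orbit mul one v w <-> alg2_iso (F v) (F w))
          & forall A : alg2 k, is_comp_alg2 A ->
              exists v, in_VCss one N v /\ alg2_iso A (F v)]].
Proof.
have two_neq0 : (2 : k) != 0 by apply: contra hk => two0; rewrite inE.
have [hO N_iso] := hC.
have orbit_sq := same_orbit_sq_class two_neq0 hO.
have sq_orbit := sq_class_same_orbit two_neq0 hO N_iso.
have norm_surj := exists_VCss_norm two_neq0 hO N_iso.
split => [v w _ _|||]; [exact: orbit_sq | exact: sq_orbit | |].
  by move=> c /norm_surj [v [vC <-]]; exists v; split; last exact: same_sq_class_refl.
exists (fun v => quad_alg (N v)); split.
- by move=> v [_ Nv] /=; apply: quad_alg_comp.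
- move=> v w vC wC; split => [/orbit_sq|/(quad_alg_iso_sq_class two_neq0)].
    exact: sq_class_quad_alg_iso.
  exact: sq_orbit vC wC.
- move=> A /(comp_alg2_quad two_neq0) [c [/norm_surj [v [vC Nv]] isoA]].
  by exists v; rewrite /= Nv.
Qed.
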